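(* (1) Soundness: if $\Phi;\Gamma\vdash_I t:\rho$ holds for a template type $\rho$, then $\Gamma\xi\vdash_J t:\rho\xi$ holds for every model $(J,\xi)$ of $\Phi$. (2) Completeness: if $\Gamma\vdash_J t:\rho$ holds for a context $\Gamma$ and a type $\rho$ (without second-order variables), then there exist a template type $\tau$ and a second-order substitution $\xi$ with $\tau\xi=\rho$ such that $\Phi;\Gamma\vdash_I t:\tau$ is derivable for some SOCP $\Phi$, and $(J,\xi)$ is a model of $\Phi$.
   Context: Simply typed terms over variables, function symbols $\mathcal F$, constructors $\mathcal C$: variables, symbols, applications $t\,u$, pairs $(t,u)$, $\mathsf{let}\ (x,y)=t\ \mathsf{in}\ u$. Second-order index terms $a::=i\mid\alpha\mid g(a_1,\dots,a_k)$ over index variables $i$, second-order variables $\alpha$, index symbols $g$ (including $0,\mathsf s,+$). An interpretation $J$ maps $k$-ary symbols to total weakly monotone functions $\mathbb N^k\to\mathbb N$ ($0,\mathsf s,+$ standard); $a\le_J b$ iff $[a]^\beta_J\le[b]^\beta_J$ for all assignments. An SOCP is a set of inequalities $a\le b$ and occurrence constraints $i\notin\alpha$; a second-order substitution $\xi$ maps second-order variables to index terms without second-order variables; $(J,\xi)$ is a model of $\Phi$ if $a\xi\le_J b\xi$ for all inequalities and $i\notin\mathrm{Var}(\xi(\alpha))$ for all occurrence constraints. Sized types: monotypes $\rho::=B^a\mid\rho_1\times\rho_2\mid\sigma\to\rho$; polytypes $\forall\vec i.\,\sigma\to\rho$; types $\sigma::=\rho\mid$ polytype; monotypes identified with $\forall\cdot.\rho$;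 template types may contain second-order variables. $\mathrm{FV}$ is the set of free index variables. $\forall\vec i.\tau\sqsupseteq\rho$ iff $\rho=\tau\{\vec i:=\vec a\}$. Subtyping $\sqsubseteq_J$: $B^a\sqsubseteq_J B^b$ if $a\le_J b$; componentwise on products; $\sigma_1\to\rho_1\sqsubseteq_J\sigma_2\to\rho_2$ if $\sigma_2\sqsubseteq_J\sigma_1$ and $\rho_1\sqsubseteq_J\rho_2$; $\forall\vec i.\rho_1\sqsubseteq_J\sigma_2$ if $\sigma_2\sqsupseteq\rho_2$, $\rho_1\sqsubseteq_J\rho_2$, $\vec i\cap\mathrm{FV}(\sigma_2)=\emptyset$. Every $s\in\mathcal F\cup\mathcal C$ has a closed declared sized type $s::\sigma$ (no second-order variables). Contexts $\Gamma$ map variables to (template) types; $\Gamma|_X$ restriction; $\Gamma\xi$ applies $\xi$ to all types. Syntax-directed typing $\Gamma\vdash_J t:\rho$: (Var) $\Gamma,x:\sigma\vdash x:\rho$ if $\sigma\sqsupseteq\rho$; (Fun) $\Gamma\vdash s:\rho$ if $s::\sigma$ and $\sigma\sqsupseteq\rho$; (Let) from $\Gamma\vdash t:\rho_1\times\rho_2$ and $\Gamma,x_1:\rho_1,x_2:\rho_2\vdash u:\rho$ infer $\Gamma\vdash\mathsf{let}\ (x_1,x_2)=t\ \mathsf{in}\ u:\rho$; (Pair) from $\Gamma\vdash t_i:\rho_i$ infer $\Gamma\vdash(t_1,t_2):\rho_1\times\rho_2$; (App) from $\Gamma\vdash t:(\forall\vec i.\tau_1)\to\rho$, $\Gamma\vdash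 u:\tau_2$, $\tau_2\sqsubseteq_J\tau_1$, $\vec i\cap\mathrm{FV}(\Gamma|_{\mathrm{FV}(u)})=\emptyset$ infer $\Gamma\vdash t\,u:\rho$. Subtyping inference $\Phi\vdash_I\sigma\sqsubseteq\tau$: $\{a\le b\}\vdash_I B^a\sqsubseteq B^b$; products: union of component constraints; arrows: from $\Phi_1\vdash_I\sigma_2\sqsubseteq\sigma_1$, $\Phi_2\vdash_I\rho_1\sqsubseteq\rho_2$ infer $\Phi_1\cup\Phi_2\vdash_I\sigma_1\to\rho_1\sqsubseteq\sigma_2\to\rho_2$; for fresh second-order $\vec\alpha$, from $\Phi\vdash_I\rho_1\sqsubseteq\rho_2\{\vec j:=\vec\alpha\}$ and $\vec i\cap\mathrm{FV}(\forall\vec j.\rho_2)=\emptyset$ infer $\Phi\cup\{\vec i\notin\rho_1\}\cup\{\vec i\notin\rho_2\}\vdash_I\forall\vec i.\rho_1\sqsubseteq\forall\vec j.\rho_2$, where $\vec i\notin\vec\rho$ is the set of occurrence constraints $i_k\notin\alpha$ for all $i_k\in\vec i$ and all second-order $\alpha$ occurring in $\vec\rho$ (for a context, in its types). Type inference $\Phi;\Gamma\vdash_I t:\rho$: (Var-I) $\emptyset;\Gamma,x:\forall\vec i.\rho\vdash_I x:\rho\{\vec i:=\vec\alpha\}$, $\vec\alpha$ fresh; (Fun-I) $\emptyset;\Gamma\vdash_I s:\rho\{\vec i:=\vec\alpha\}$ if $s\in\mathcal F\cup\mathcal C$, $s::\forall\vec i.\rho$, $\vec\alpha$ fresh; (Let-I)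 from $\Phi_1;\Gamma\vdash_I t:\rho_1\times\rho_2$ and $\Phi_2;\Gamma,x_1:\rho_1,x_2:\rho_2\vdash_I u:\rho$ infer $\Phi_1\cup\Phi_2;\Gamma\vdash_I\mathsf{let}\ (x_1,x_2)=t\ \mathsf{in}\ u:\rho$; (Pair-I) from $\Phi_i;\Gamma\vdash_I t_i:\rho_i$ infer $\Phi_1\cup\Phi_2;\Gamma\vdash_I(t_1,t_2):\rho_1\times\rho_2$; (App-I) from $\Phi_1;\Gamma\vdash_I t:(\forall\vec i.\tau_1)\to\rho$, $\Phi_2;\Gamma\vdash_I u:\tau_2$, $\Phi_3\vdash_I\tau_2\sqsubseteq\tau_1$ and $\vec i\cap\mathrm{FV}(\Gamma|_{\mathrm{FV}(u)})=\emptyset$ infer $\Phi_1\cup\Phi_2\cup\Phi_3\cup\{\vec i\notin\tau_1\}\cup\{\vec i\notin\Gamma|_{\mathrm{FV}(u)}\};\Gamma\vdash_I t\,u:\rho$. *)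

(* Binders of index variables (the "forall i1..in." of polytypes) are
   represented in locally-nameless style, so that alpha-equivalent types are
   syntactically equal; free index variables are named by nat. *)
From Stdlib Require Import List Arith Bool.
Import ListNotations.

Inductive idx : Type :=
| IVar   (i : nat)
| IBound (d k : nat)             (* bound: k-th variable of the d-th
                                    enclosing forall (0 = innermost)    *)
| ISO    (alpha : nat)
| IZero
| ISucc  (a : idx)
| IPlus  (a b : idx)
| IFun   (g : nat) (args : list idx).
  (* index symbol g applied to args; the arity of the symbol is the
     length of args (symbols of different arities are different symbols) *)

Definition interp := nat -> list nat -> nat.

Definition interpretation (J : interp) : Prop :=
  forall g l1 l2, Forall2 le l1 l2 -> J g l1 <= J g l2.

(* Bound and second-order variables never occur in the terms
   that are evaluated (evaluation is only used on index terms without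
   second-order variables); they are sent to 0 for totality. *)
Fixpoint eval (J : interp) (beta : nat -> nat) (a : idx) : nat :=
  match a with
  | IVar i => beta i
  | IBound _ _ => 0
  | ISO _ => 0
  | IZero => 0
  | ISucc a => S (eval J beta a)
  | IPlus a b => eval J beta a + eval J beta b
  | IFun g args => J g (map (eval J beta) args)
  end.

Definition idx_le (J : interp) (a b : idx) : Prop :=
  forall beta : nat -> nat, eval J beta a <= eval J beta b.

Fixpoint fv_idx (a : idx) : list nat :=
  match a with
  | IVar i => [i]
  | IBound _ _ | ISO _ | IZero => []
  | ISucc a => fv_idx a
  | IPlus a b => fv_idx a ++ fv_idx b
  | IFun _ args => flat_map fv_idx args
  end.

Fixpoint sov_idx (a : idx) : list nat :=
  match a with
  | ISO al => [al]
  | IVar _ | IBound _ _ | IZero => []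
  | ISucc a => sov_idx a
  | IPlus a b => sov_idx a ++ sov_idx b
  | IFun _ args => flat_map sov_idx args
  end.

(* "pure" index term: an index term in the paper's sense (no bound-variable
   placeholder) without second-order variables *)
Fixpoint pure_idx (a : idx) : Prop :=
  match a with
  | IVar _ | IZero => True
  | IBound _ _ | ISO _ => False
  | ISucc a => pure_idx a
  | IPlus a b => pure_idx a /\ pure_idx b
  | IFun _ args => fold_right (fun b P => pure_idx b /\ P) True args
  end.

(* an index term of the paper (possibly with second-order variables):
   contains no bound-variable placeholder *)
Fixpoint lc_idx (a : idx) : Prop :=
  match a with
  | IVar _ | IZero | ISO _ => True
  | IBound _ _ => False
  | ISucc a => lc_idx a
  | IPlus a b => lc_idx a /\ lc_idx b
  | IFun _ args => fold_right (fun b P => lc_idx b /\ P) True args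
  end.

Fixpoint open_idx (d : nat) (as_ : list idx) (a : idx) : idx :=
  match a with
  | IBound e k => if Nat.eqb e d then nth k as_ IZero else IBound e k
  | ISucc a => ISucc (open_idx d as_ a)
  | IPlus a b => IPlus (open_idx d as_ a) (open_idx d as_ b)
  | IFun g args => IFun g (map (open_idx d as_) args)
  | a => a
  end.

Fixpoint so_subst_idx (xi : nat -> idx) (a : idx) : idx :=
  match a with
  | ISO al => xi al
  | ISucc a => ISucc (so_subst_idx xi a)
  | IPlus a b => IPlus (so_subst_idx xi a) (so_subst_idx xi b)
  | IFun g args => IFun g (map (so_subst_idx xi) args)
  | a => a
  end.

(* validity of bound variables w.r.t. the binder sizes ds (innermost first) *)
Fixpoint wf_idx (ds : list nat) (a : idx) : Prop :=
  match a with
  | IBound e k => exists m, nth_error ds e = Some m /\ k < m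
  | IVar _ | IZero | ISO _ => True
  | ISucc a => wf_idx ds a
  | IPlus a b => wf_idx ds a /\ wf_idx ds b
  | IFun _ args => fold_right (fun b P => wf_idx ds b /\ P) True args
  end.

(* rho ::= B^a | rho1 x rho2 | sigma -> rho ;
   sigma ::= forall (n variables). rho   (n = 0 : a monotype) *)
Inductive mono : Type :=
| TBase (B : nat) (a : idx)
| TProd (r1 r2 : mono)
| TArr  (s : sty) (r : mono)
with sty : Type :=
| TAll (n : nat) (r : mono).

Fixpoint open_mono (d : nat) (as_ : list idx) (r : mono) : mono :=
  match r with
  | TBase B a => TBase B (open_idx d as_ a)
  | TProd r1 r2 => TProd (open_mono d as_ r1) (open_mono d as_ r2)
  | TArr s r => TArr (open_sty d as_ s) (open_mono d as_ r)
  end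
with open_sty (d : nat) (as_ : list idx) (s : sty) : sty :=
  match s with
  | TAll n r => TAll n (open_mono (S d) as_ r)
  end.

Definition open (r : mono) (as_ : list idx) : mono := open_mono 0 as_ r.

Fixpoint fv_mono (r : mono) : list nat :=
  match r with
  | TBase _ a => fv_idx a
  | TProd r1 r2 => fv_mono r1 ++ fv_mono r2
  | TArr s r => fv_sty s ++ fv_mono r
  end
with fv_sty (s : sty) : list nat :=
  match s with TAll _ r => fv_mono r end.

Fixpoint sov_mono (r : mono) : list nat :=
  match r with
  | TBase _ a => sov_idx a
  | TProd r1 r2 => sov_mono r1 ++ sov_mono r2
  | TArr s r => sov_sty s ++ sov_mono r
  end
with sov_sty (s : sty) : list nat :=
  match s with TAll _ r => sov_mono r end.

Fixpoint so_subst_mono (xi : nat -> idx) (r : mono) : mono :=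
  match r with
  | TBase B a => TBase B (so_subst_idx xi a)
  | TProd r1 r2 => TProd (so_subst_mono xi r1) (so_subst_mono xi r2)
  | TArr s r => TArr (so_subst_sty xi s) (so_subst_mono xi r)
  end
with so_subst_sty (xi : nat -> idx) (s : sty) : sty :=
  match s with TAll n r => TAll n (so_subst_mono xi r) end.

Fixpoint wf_mono (ds : list nat) (r : mono) : Prop :=
  match r with
  | TBase _ a => wf_idx ds a
  | TProd r1 r2 => wf_mono ds r1 /\ wf_mono ds r2
  | TArr s r => wf_sty ds s /\ wf_mono ds r
  end
with wf_sty (ds : list nat) (s : sty) : Prop :=
  match s with
  | TAll n r =>
      (0 < n -> match r with TArr _ _ => True | _ => False end)
      /\ wf_mono (n :: ds) r
  end.

Definition inst (s : sty) (r : mono) : Prop :=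
  match s with
  | TAll n body =>
      exists as_ : list idx, length as_ = n /\ Forall pure_idx as_ /\
                             r = open body as_
  end.

Definition fresh_names (n : nat) (is : list nat) (avoid : list nat) : Prop :=
  length is = n /\ NoDup is /\ forall i, In i is -> ~ In i avoid.

Definition ivars (is : list nat) : list idx := map IVar is.
Definition sovars (als : list nat) : list idx := map ISO als.

Inductive sub_mono (J : interp) : mono -> mono -> Prop :=
| SubBase : forall B a b, idx_le J a b -> sub_mono J (TBase B a) (TBase B b)
| SubProd : forall r1 r2 r1' r2',
    sub_mono J r1 r1' -> sub_mono J r2 r2' ->
    sub_mono J (TProd r1 r2) (TProd r1' r2')
| SubArr : forall s1 r1 s2 r2,
    sub_sty J s2 s1 -> sub_mono J r1 r2 ->
    sub_mono J (TArr s1 r1) (TArr s2 r2)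
with sub_sty (J : interp) : sty -> sty -> Prop :=
| SubAll : forall n r1 s2 r2 is,
    fresh_names n is (fv_sty s2 ++ fv_sty (TAll n r1)) ->
    inst s2 r2 ->
    sub_mono J (open r1 (ivars is)) r2 ->
    sub_sty J (TAll n r1) s2.

(* term variables and symbols of F ∪ C are named by nat *)
Inductive term : Type :=
| Var  (x : nat)
| Sym  (s : nat)
| App  (t u : term)
| Pair (t u : term)
| Let  (x1 x2 : nat) (t u : term).   (* let (x1,x2) = t in u *)

Fixpoint fv_term (t : term) : list nat :=
  match t with
  | Var x => [x]
  | Sym _ => []
  | App t u | Pair t u => fv_term t ++ fv_term u
  | Let x1 x2 t u =>
      fv_term t ++ filter (fun y => negb (Nat.eqb y x1) && negb (Nat.eqb y x2))
                          (fv_term u)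
  end.

(* contexts: the most recent binding (head of the list) shadows *)
Definition ctx := list (nat * sty).

Fixpoint lookup (G : ctx) (x : nat) : option sty :=
  match G with
  | [] => None
  | (y, s) :: G' => if Nat.eqb x y then Some s else lookup G' x
  end.

Definition fv_ctx_on (G : ctx) (X : list nat) : list nat :=
  flat_map (fun x => match lookup G x with Some s => fv_sty s | None => [] end) X.
Definition sov_ctx_on (G : ctx) (X : list nat) : list nat :=
  flat_map (fun x => match lookup G x with Some s => sov_sty s | None => [] end) X.

Definition sov_ctx (G : ctx) : list nat := flat_map (fun p => sov_sty (snd p)) G.
Definition so_subst_ctx (xi : nat -> idx) (G : ctx) : ctx :=
  map (fun p => (fst p, so_subst_sty xi (snd p))) G.
Definition wf_ctx (G : ctx) : Prop := Forall (fun p => wf_sty [] (snd p)) G.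

Definition decl_ok (decl : nat -> sty) : Prop :=
  forall s, wf_sty [] (decl s) /\ fv_sty (decl s) = [] /\ sov_sty (decl s) = [].

Inductive typing (decl : nat -> sty) (J : interp) : ctx -> term -> mono -> Prop :=
| TyVar : forall G x s r, lookup G x = Some s -> inst s r -> typing decl J G (Var x) r
| TyFun : forall G f r, inst (decl f) r -> typing decl J G (Sym f) r
| TyLet : forall G x1 x2 t u r1 r2 r,
    typing decl J G t (TProd r1 r2) ->
    typing decl J ((x2, TAll 0 r2) :: (x1, TAll 0 r1) :: G) u r ->
    typing decl J G (Let x1 x2 t u) r
| TyPair : forall G t u r1 r2,
    typing decl J G t r1 -> typing decl J G u r2 ->
    typing decl J G (Pair t u) (TProd r1 r2)
| TyApp : forall G t u n t1 r t2 is,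
    typing decl J G t (TArr (TAll n t1) r) ->
    typing decl J G u t2 ->
    fresh_names n is (fv_ctx_on G (fv_term u) ++ fv_sty (TAll n t1)) ->
    sub_mono J t2 (open t1 (ivars is)) ->
    typing decl J G (App t u) r.

Inductive constr : Type :=
| CLe (a b : idx)
| CNotIn (i alpha : nat).

Definition socp := list constr.

(* i⃗ ∉ (things whose second-order variables are als) *)
Definition occ (is als : list nat) : socp :=
  flat_map (fun i => map (CNotIn i) als) is.

Definition so_substitution (xi : nat -> idx) : Prop := forall al, pure_idx (xi al).

Definition satisfies (J : interp) (xi : nat -> idx) (c : constr) : Prop :=
  match c with
  | CLe a b => idx_le J (so_subst_idx xi a) (so_subst_idx xi b)
  | CNotIn i al => ~ In i (fv_idx (xi al))
  end.

Definition model (J : interp) (xi : nat -> idx) (Phi : socp) : Prop :=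
  interpretation J /\ so_substitution xi /\ Forall (satisfies J xi) Phi.

(* Inference.  Freshness of second-order variables is made precise by   *)
(* threading the list U of second-order variables already in use:       *)
(* judgements have the form  U ; Phi ; ... ; U'.                        *)

Definition fresh_so (n : nat) (als U : list nat) : Prop :=
  length als = n /\ NoDup als /\ forall a, In a als -> ~ In a U.

Inductive isub_mono : list nat -> mono -> mono -> socp -> list nat -> Prop :=
| ISubBase : forall U B a b, isub_mono U (TBase B a) (TBase B b) [CLe a b] U
| ISubProd : forall U U1 U2 r1 r2 r1' r2' P1 P2,
    isub_mono U r1 r1' P1 U1 -> isub_mono U1 r2 r2' P2 U2 ->
    isub_mono U (TProd r1 r2) (TProd r1' r2') (P1 ++ P2) U2
| ISubArr : forall U U1 U2 s1 r1 s2 r2 P1 P2,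
    isub_sty U s2 s1 P1 U1 -> isub_mono U1 r1 r2 P2 U2 ->
    isub_mono U (TArr s1 r1) (TArr s2 r2) (P1 ++ P2) U2
with isub_sty : list nat -> sty -> sty -> socp -> list nat -> Prop :=
| ISubAll : forall U U' n r1 m r2 is als P,
    fresh_names n is (fv_sty (TAll m r2) ++ fv_sty (TAll n r1)) ->
    fresh_so m als U ->
    isub_mono (als ++ U) (open r1 (ivars is)) (open r2 (sovars als)) P U' ->
    isub_sty U (TAll n r1) (TAll m r2)
             (P ++ occ is (sov_mono r1) ++ occ is (sov_mono r2)) U'.

Inductive infer (decl : nat -> sty) : list nat -> ctx -> term -> socp -> mono -> list nat -> Prop :=
| IVarI : forall U G x n r als,
    lookup G x = Some (TAll n r) -> fresh_so n als U ->
    infer decl U G (Var x) [] (open r (sovars als)) (als ++ U)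
| IFunI : forall U G f n r als,
    decl f = TAll n r -> fresh_so n als U ->
    infer decl U G (Sym f) [] (open r (sovars als)) (als ++ U)
| ILetI : forall U U1 U2 G x1 x2 t u P1 P2 r1 r2 r,
    infer decl U G t P1 (TProd r1 r2) U1 ->
    infer decl U1 ((x2, TAll 0 r2) :: (x1, TAll 0 r1) :: G) u P2 r U2 ->
    infer decl U G (Let x1 x2 t u) (P1 ++ P2) r U2
| IPairI : forall U U1 U2 G t u P1 P2 r1 r2,
    infer decl U G t P1 r1 U1 -> infer decl U1 G u P2 r2 U2 ->
    infer decl U G (Pair t u) (P1 ++ P2) (TProd r1 r2) U2
| IAppI : forall U U1 U2 U3 G t u n t1 r t2 is P1 P2 P3,
    infer decl U G t P1 (TArr (TAll n t1) r) U1 ->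
    infer decl U1 G u P2 t2 U2 ->
    fresh_names n is (fv_ctx_on G (fv_term u) ++ fv_sty (TAll n t1)) ->
    isub_mono U2 t2 (open t1 (ivars is)) P3 U3 ->
    infer decl U G (App t u)
          (P1 ++ P2 ++ P3 ++ occ is (sov_mono t1)
              ++ occ is (sov_ctx_on G (fv_term u))) r U3.

From Stdlib Require Import List Arith Lia.
Import ListNotations.

(* Soundness is by induction on the inference derivation: a model xi of the
   constraints instantiates each block of fresh second-order variables by index
   terms, which is an instance of the corresponding polytype, and the
   occurrence constraints i ∉ alpha are exactly what prevents xi from
   capturing the fresh bound index variables chosen by (App-I) and by
   subtyping of polytypes.

   Completeness is by induction on the typing (and subtyping) derivation,
   threading the set U of second-order variables in use and a substitution
   that is extended on every fresh block by the index terms the typing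
   derivation instantiates it with.  Freshness of the bound index variables
   with respect to the substituted types yields at once the freshness side
   conditions of inference and the occurrence constraints. *)

Section IdxInduction.
Variable P : idx -> Prop.
Hypothesis HVar : forall i, P (IVar i).
Hypothesis HBound : forall d k, P (IBound d k).
Hypothesis HSO : forall al, P (ISO al).
Hypothesis HZero : P IZero.
Hypothesis HSucc : forall a, P a -> P (ISucc a).
Hypothesis HPlus : forall a b, P a -> P b -> P (IPlus a b).
Hypothesis HFun : forall g l, Forall P l -> P (IFun g l).

Fixpoint idx_nested_ind (a : idx) : P a :=
  match a with
  | IVar i => HVar i
  | IBound d k => HBound d k
  | ISO al => HSO al
  | IZero => HZero
  | ISucc a => HSucc a (idx_nested_ind a)
  | IPlus a b => HPlus a b (idx_nested_ind a) (idx_nested_ind b)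
  | IFun g l => HFun g l ((fix go l : Forall P l :=
      match l with
      | [] => Forall_nil P
      | b :: l' => Forall_cons b (idx_nested_ind b) (go l')
      end) l)
  end.
End IdxInduction.

Lemma fold_right_and_Forall {A} (Q : A -> Prop) (l : list A) :
  fold_right (fun b P => Q b /\ P) True l <-> Forall Q l.
Proof. induction l; simpl; rewrite ?Forall_cons_iff; [split; auto | tauto]. Qed.

Lemma open_idx_pure a d as_ : pure_idx a -> open_idx d as_ a = a.
Proof.
  induction a using idx_nested_ind; simpl; intros Ha; try tauto.
  - now rewrite IHa.
  - destruct Ha; now rewrite IHa1, IHa2.
  - f_equal. apply fold_right_and_Forall in Ha. rewrite Forall_forall in H, Ha.
    rewrite <- (map_id l) at 2. apply map_ext_in; auto.
Qed.

Lemma so_subst_open_idx xi a d as_ : so_substitution xi ->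
  so_subst_idx xi (open_idx d as_ a) =
  open_idx d (map (so_subst_idx xi) as_) (so_subst_idx xi a).
Proof.
  intros Hxi. induction a using idx_nested_ind; simpl; f_equal; auto.
  - destruct (Nat.eqb d0 d); simpl; auto.
    change IZero with (so_subst_idx xi IZero) at 2. now rewrite map_nth.
  - now rewrite open_idx_pure.
  - rewrite !map_map. apply map_ext_in. now apply Forall_forall.
Qed.

Lemma so_subst_idx_agree xi1 xi2 a :
  (forall al, In al (sov_idx a) -> xi1 al = xi2 al) ->
  so_subst_idx xi1 a = so_subst_idx xi2 a.
Proof.
  induction a using idx_nested_ind; simpl; intros Hag; auto.
  - now rewrite IHa.
  - rewrite IHa1, IHa2; auto; intros; apply Hag, in_or_app; auto.
  - f_equal. apply map_ext_in. intros b Hb. rewrite Forall_forall in H.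
    apply H; auto. intros al Hal; apply Hag, in_flat_map; eauto.
Qed.

Lemma so_subst_idx_ISO a : so_subst_idx ISO a = a.
Proof.
  induction a using idx_nested_ind; simpl; f_equal; auto.
  rewrite <- (map_id l) at 2. apply map_ext_in. now apply Forall_forall.
Qed.

Lemma in_fv_so_subst_idx xi a i :
  In i (fv_idx (so_subst_idx xi a)) <->
  In i (fv_idx a) \/ exists al, In al (sov_idx a) /\ In i (fv_idx (xi al)).
Proof.
  induction a using idx_nested_ind; simpl.
  - firstorder.
  - firstorder.
  - split; [eauto | intros [[]|(al' & [<-|[]] & Hi)]; auto].
  - firstorder.
  - exact IHa.
  - rewrite !in_app_iff, IHa1, IHa2. setoid_rewrite in_app_iff. firstorder.
  - rewrite Forall_forall in H. split.
    + intros (b' & Hb' & Hi)%in_flat_map. apply in_map_iff in Hb' as (b & <- & Hb).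
      destruct (proj1 (H b Hb) Hi) as [? | (al & ? & ?)].
      * left; apply in_flat_map; eauto.
      * right; exists al; split; auto; apply in_flat_map; eauto.
    + intros [(b & Hb & Hi)%in_flat_map | (al & (b & Hb & Hal)%in_flat_map & Hi)];
        apply in_flat_map; exists (so_subst_idx xi b);
        rewrite in_map_iff, H by auto; split; eauto.
Qed.

Lemma in_sov_open_idx a d as_ al : In al (sov_idx (open_idx d as_ a)) ->
  In al (sov_idx a) \/ In al (flat_map sov_idx as_).
Proof.
  induction a using idx_nested_ind; simpl; intros Hal; auto.
  - destruct (Nat.eqb d0 d); simpl in Hal; [|tauto].
    destruct (nth_in_or_default k as_ IZero) as [Hin | Hdef].
    + right; apply in_flat_map; eauto.
    + rewrite Hdef in Hal; destruct Hal.
  - rewrite !in_app_iff in *. destruct Hal as [H1 | H2]; [apply IHa1 in H1 | apply IHa2 in H2];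
      tauto.
  - apply in_flat_map in Hal as (b' & Hb' & Hi). apply in_map_iff in Hb' as (b & <- & Hb).
    rewrite Forall_forall in H. destruct (H b Hb Hi); auto.
    left; apply in_flat_map; eauto.
Qed.

Scheme mono_sty_ind := Induction for mono Sort Prop
  with sty_mono_ind := Induction for sty Sort Prop.
Combined Scheme mono_sty_mutind from mono_sty_ind, sty_mono_ind.

Lemma so_subst_open_mono_sty xi : so_substitution xi ->
  (forall r d as_, so_subst_mono xi (open_mono d as_ r) =
     open_mono d (map (so_subst_idx xi) as_) (so_subst_mono xi r)) /\
  (forall s d as_, so_subst_sty xi (open_sty d as_ s) =
     open_sty d (map (so_subst_idx xi) as_) (so_subst_sty xi s)).
Proof.
  intros Hxi. apply mono_sty_mutind; simpl; intros; f_equal; auto using so_subst_open_idx.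
Qed.

Lemma so_subst_open xi r as_ : so_substitution xi ->
  so_subst_mono xi (open r as_) = open (so_subst_mono xi r) (map (so_subst_idx xi) as_).
Proof. intros Hxi; apply (so_subst_open_mono_sty xi Hxi). Qed.

Lemma so_subst_mono_sty_agree :
  (forall r xi1 xi2, (forall al, In al (sov_mono r) -> xi1 al = xi2 al) ->
     so_subst_mono xi1 r = so_subst_mono xi2 r) /\
  (forall s xi1 xi2, (forall al, In al (sov_sty s) -> xi1 al = xi2 al) ->
     so_subst_sty xi1 s = so_subst_sty xi2 s).
Proof.
  apply mono_sty_mutind; simpl; intros; f_equal; auto using so_subst_idx_agree;
    match goal with IH : _ |- _ => apply IH end; intros; auto using in_or_app.
Qed.

Lemma so_subst_mono_agree xi1 xi2 r :
  (forall al, In al (sov_mono r) -> xi1 al = xi2 al) ->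
  so_subst_mono xi1 r = so_subst_mono xi2 r.
Proof. apply so_subst_mono_sty_agree. Qed.

Lemma so_subst_sty_agree xi1 xi2 s :
  (forall al, In al (sov_sty s) -> xi1 al = xi2 al) ->
  so_subst_sty xi1 s = so_subst_sty xi2 s.
Proof. apply so_subst_mono_sty_agree. Qed.

Lemma so_subst_mono_sty_ISO :
  (forall r, so_subst_mono ISO r = r) /\ (forall s, so_subst_sty ISO s = s).
Proof. apply mono_sty_mutind; simpl; intros; f_equal; auto using so_subst_idx_ISO. Qed.

Lemma so_subst_sty_closed xi s : sov_sty s = [] -> so_subst_sty xi s = s.
Proof.
  intros Hs. rewrite <- (proj2 so_subst_mono_sty_ISO s) at 2.
  apply so_subst_sty_agree. rewrite Hs; intros _ [].
Qed.

Lemma in_fv_so_subst_mono_sty xi i :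
  (forall r, In i (fv_mono (so_subst_mono xi r)) <->
     In i (fv_mono r) \/ exists al, In al (sov_mono r) /\ In i (fv_idx (xi al))) /\
  (forall s, In i (fv_sty (so_subst_sty xi s)) <->
     In i (fv_sty s) \/ exists al, In al (sov_sty s) /\ In i (fv_idx (xi al))).
Proof.
  apply mono_sty_mutind; simpl; intros; auto using in_fv_so_subst_idx;
    rewrite !in_app_iff, H, H0; setoid_rewrite in_app_iff; firstorder.
Qed.

Lemma in_sov_open_mono_sty :
  (forall r d as_ al, In al (sov_mono (open_mono d as_ r)) ->
     In al (sov_mono r) \/ In al (flat_map sov_idx as_)) /\
  (forall s d as_ al, In al (sov_sty (open_sty d as_ s)) ->
     In al (sov_sty s) \/ In al (flat_map sov_idx as_)).
Proof.
  apply mono_sty_mutind; simpl; intros; eauto using in_sov_open_idx;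
    rewrite !in_app_iff in *; firstorder.
Qed.

Lemma sov_open_ivars r is : incl (sov_mono (open r (ivars is))) (sov_mono r).
Proof.
  intros al Hal. apply (proj1 in_sov_open_mono_sty) in Hal as [? | Hal]; auto.
  apply in_flat_map in Hal as (b & Hb & Hal).
  apply in_map_iff in Hb as (i & <- & _). destruct Hal.
Qed.

Lemma sov_open_sovars r als : incl (sov_mono (open r (sovars als))) (als ++ sov_mono r).
Proof.
  intros al Hal. apply in_or_app.
  apply (proj1 in_sov_open_mono_sty) in Hal as [? | Hal]; auto.
  apply in_flat_map in Hal as (b & Hb & Hal).
  apply in_map_iff in Hb as (al' & <- & ?). destruct Hal as [<- | []]; auto.
Qed.

Lemma map_so_subst_ivars xi is : map (so_subst_idx xi) (ivars is) = ivars is.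
Proof. unfold ivars; rewrite map_map; reflexivity. Qed.

Lemma map_so_subst_sovars xi als : map (so_subst_idx xi) (sovars als) = map xi als.
Proof. unfold sovars; rewrite map_map; reflexivity. Qed.

Lemma lookup_so_subst_ctx xi G x :
  lookup (so_subst_ctx xi G) x = option_map (so_subst_sty xi) (lookup G x).
Proof. induction G as [|[y s] G IH]; simpl; auto. now destruct (Nat.eqb x y). Qed.

Lemma lookup_sov_ctx G x s : lookup G x = Some s -> incl (sov_sty s) (sov_ctx G).
Proof.
  unfold sov_ctx. induction G as [|[y s'] G IH]; simpl; [discriminate|].
  destruct (Nat.eqb x y); intros Hx al Hal; apply in_or_app;
    [injection Hx as ->; auto | right; apply IH; auto].
Qed.

Lemma sov_ctx_on_incl G X : incl (sov_ctx_on G X) (sov_ctx G).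
Proof.
  intros al (x & _ & Hal)%in_flat_map.
  destruct (lookup G x) eqn:Hx; [|destruct Hal]. eapply lookup_sov_ctx; eauto.
Qed.

Lemma so_subst_ctx_agree xi1 xi2 G :
  (forall al, In al (sov_ctx G) -> xi1 al = xi2 al) ->
  so_subst_ctx xi1 G = so_subst_ctx xi2 G.
Proof.
  unfold sov_ctx. induction G as [|[y s] G IH]; simpl; intros Hag; auto.
  f_equal; [f_equal; apply so_subst_sty_agree | apply IH]; intros; apply Hag, in_or_app; auto.
Qed.

Lemma so_subst_ctx_closed xi G : sov_ctx G = [] -> so_subst_ctx xi G = G.
Proof.
  unfold sov_ctx. induction G as [|[y s] G IH]; simpl; intros HG; auto.
  apply app_eq_nil in HG as [Hs HG]. now rewrite so_subst_sty_closed, IH.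
Qed.

Lemma in_fv_so_subst_ctx_on xi G X i :
  In i (fv_ctx_on (so_subst_ctx xi G) X) <->
  In i (fv_ctx_on G X) \/ exists al, In al (sov_ctx_on G X) /\ In i (fv_idx (xi al)).
Proof.
  unfold fv_ctx_on, sov_ctx_on. rewrite !in_flat_map. setoid_rewrite in_flat_map.
  setoid_rewrite lookup_so_subst_ctx. split.
  - intros (x & Hx & Hi). destruct (lookup G x) as [s|] eqn:Hlk; simpl in Hi; [|destruct Hi].
    apply (proj2 (in_fv_so_subst_mono_sty xi i)) in Hi as [Hi | (al & Hal & Hi)];
      [left | right; exists al; split; auto]; exists x; rewrite Hlk; auto.
  - intros [(x & Hx & Hi) | (al & (x & Hx & Hal) & Hi)]; exists x; split; auto;
      destruct (lookup G x) as [s|]; simpl; try contradiction;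
      apply (proj2 (in_fv_so_subst_mono_sty xi i)); eauto.
Qed.

Definition sov_constr (c : constr) : list nat :=
  match c with CLe a b => sov_idx a ++ sov_idx b | CNotIn _ al => [al] end.

Lemma satisfies_agree J xi1 xi2 c :
  (forall al, In al (sov_constr c) -> xi1 al = xi2 al) ->
  satisfies J xi1 c -> satisfies J xi2 c.
Proof.
  destruct c as [a b | i al]; simpl; intros Hag Hc.
  - rewrite <- (so_subst_idx_agree xi1 xi2 a), <- (so_subst_idx_agree xi1 xi2 b); auto;
      intros; apply Hag, in_or_app; auto.
  - now rewrite <- Hag by auto.
Qed.

Lemma in_occ is als c : In c (occ is als) <->
  exists i al, In i is /\ In al als /\ c = CNotIn i al.
Proof.
  unfold occ. rewrite in_flat_map. setoid_rewrite in_map_iff. firstorder congruence.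
Qed.

Lemma Forall_satisfies_occ J xi is als :
  Forall (satisfies J xi) (occ is als) <->
  forall i al, In i is -> In al als -> ~ In i (fv_idx (xi al)).
Proof.
  rewrite Forall_forall. setoid_rewrite in_occ. split.
  - intros Hocc i al Hi Hal. apply (Hocc (CNotIn i al)); eauto.
  - intros Hocc c (i & al & Hi & Hal & ->); simpl; auto.
Qed.

Lemma Forall_sov_occ is als V : incl als V ->
  Forall (fun c => incl (sov_constr c) V) (occ is als).
Proof.
  intros Hals. apply Forall_forall. intros c (i & al & _ & Hal & ->)%in_occ.
  intros al' [<- | []]; auto.
Qed.

Scheme isub_mono_mut := Induction for isub_mono Sort Prop
  with isub_sty_mut := Induction for isub_sty Sort Prop.
Combined Scheme isub_mutind from isub_mono_mut, isub_sty_mut.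

Lemma inst_so_subst_sovars xi n r als : so_substitution xi -> length als = n ->
  inst (so_subst_sty xi (TAll n r)) (so_subst_mono xi (open r (sovars als))).
Proof.
  intros Hxi Hlen. exists (map xi als). repeat split.
  - now rewrite length_map.
  - apply Forall_forall; intros a (al & <- & _)%in_map_iff; apply Hxi.
  - now rewrite so_subst_open, map_so_subst_sovars.
Qed.

Lemma isub_sound J xi : so_substitution xi ->
  (forall U r1 r2 P U', isub_mono U r1 r2 P U' -> Forall (satisfies J xi) P ->
     sub_mono J (so_subst_mono xi r1) (so_subst_mono xi r2)) /\
  (forall U s1 s2 P U', isub_sty U s1 s2 P U' -> Forall (satisfies J xi) P ->
     sub_sty J (so_subst_sty xi s1) (so_subst_sty xi s2)).
Proof.
  intros Hxi. apply isub_mutind; simpl.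
  - intros U B a b Hsat. constructor. now inversion Hsat.
  - intros * _ IH1 _ IH2. rewrite Forall_app. constructor; tauto.
  - intros * _ IH1 _ IH2. rewrite Forall_app. constructor; tauto.
  - intros U U' n r1 m r2 is als P Hfresh Hals _ IH Hsat.
    rewrite !Forall_app, !Forall_satisfies_occ in Hsat. destruct Hsat as (HP & Hocc1 & Hocc2).
    apply SubAll with (is := is) (r2 := so_subst_mono xi (open r2 (sovars als))).
    + destruct Hfresh as (Hlen & Hnd & Hfr). split; [|split]; auto.
      intros i Hi. specialize (Hfr i Hi). simpl in *.
      rewrite !in_app_iff, !(proj1 (in_fv_so_subst_mono_sty xi i)) in *. firstorder.
    + apply inst_so_subst_sovars; auto. apply Hals.
    + rewrite <- (map_so_subst_ivars xi is), <- so_subst_open; auto.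
Qed.

Lemma infer_sound decl J xi : decl_ok decl -> so_substitution xi ->
  forall U G t P r U', infer decl U G t P r U' -> Forall (satisfies J xi) P ->
  typing decl J (so_subst_ctx xi G) t (so_subst_mono xi r).
Proof.
  intros Hdecl Hxi.
  induction 1 as [U G x n r als Hx Hals | U G f n r als Hf Hals
      | U U1 U2 G x1 x2 t u P1 P2 r1 r2 r Ht IHt Hu IHu | U U1 U2 G t u P1 P2 r1 r2 Ht IHt Hu IHu
      | U U1 U2 U3 G t u n t1 r t2 is P1 P2 P3 Ht IHt Hu IHu Hfresh Hsub];
    rewrite ?Forall_app; intros Hsat.
  - apply TyVar with (so_subst_sty xi (TAll n r)).
    + now rewrite lookup_so_subst_ctx, Hx.
    + apply inst_so_subst_sovars; auto. apply Hals.
  - apply TyFun. destruct (Hdecl f) as (_ & _ & Hclosed). rewrite Hf in *.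
    rewrite <- (so_subst_sty_closed xi (TAll n r)) by auto.
    apply inst_so_subst_sovars; auto. apply Hals.
  - apply TyLet with (so_subst_mono xi r1) (so_subst_mono xi r2);
      [apply IHt | apply IHu]; tauto.
  - constructor; tauto.
  - destruct Hsat as (Htsat & Husat & Hsubsat & Hocc1 & Hocc2).
    rewrite !Forall_satisfies_occ in Hocc1, Hocc2.
    apply TyApp with n (so_subst_mono xi t1) (so_subst_mono xi t2) is; auto.
    + destruct Hfresh as (Hlen & Hnd & Hfr). split; [|split]; auto.
      intros i Hi. specialize (Hfr i Hi). simpl in *.
      rewrite !in_app_iff, in_fv_so_subst_ctx_on, (proj1 (in_fv_so_subst_mono_sty xi i)) in *.
      firstorder.
    + rewrite <- (map_so_subst_ivars xi is), <- so_subst_open by auto.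
      eapply isub_sound; eauto.
Qed.

Lemma fresh_names_exists n avoid : exists is, fresh_names n is avoid.
Proof.
  exists (seq (S (list_max avoid)) n). split; [apply length_seq|]. split; [apply seq_NoDup|].
  intros i Hi Ha. apply in_seq in Hi.
  assert (Hmax : Forall (fun k => k <= list_max avoid) avoid) by now apply list_max_le.
  rewrite Forall_forall in Hmax. specialize (Hmax i Ha). lia.
Qed.

Fixpoint so_update (xi : nat -> idx) (als : list nat) (as_ : list idx) (al : nat) : idx :=
  match als, as_ with
  | a :: als', b :: as' => if Nat.eqb al a then b else so_update xi als' as' al
  | _, _ => xi al
  end.

Lemma so_update_notin xi als as_ al : ~ In al als -> so_update xi als as_ al = xi al.
Proof.
  revert as_; induction als as [|a als IH]; intros [|b as_] Hal; simpl; auto.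
  destruct (Nat.eqb_spec al a); [subst; exfalso; apply Hal; now left |].
  apply IH; intros Hin; apply Hal; now right.
Qed.

Lemma map_so_update xi als as_ : NoDup als -> length als = length as_ ->
  map (so_update xi als as_) als = as_.
Proof.
  revert as_; induction als as [|a als IH]; intros [|b as_] Hnd Hlen; try discriminate; auto.
  inversion_clear Hnd as [|? ? Ha Hnd']. simpl. rewrite Nat.eqb_refl. f_equal.
  rewrite <- (IH as_) at 1 by auto. apply map_ext_in. intros al Hal.
  destruct (Nat.eqb_spec al a); [subst; contradiction | reflexivity].
Qed.

Lemma so_update_so_substitution xi als as_ : so_substitution xi -> Forall pure_idx as_ ->
  so_substitution (so_update xi als as_).
Proof.
  intros Hxi Has al. revert as_ Has; induction als as [|a als IH]; intros [|b as_] Has;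
    simpl; auto.
  inversion_clear Has. destruct (Nat.eqb al a); auto.
Qed.

(* [P] mentions only variables of [U'], so every later extension of [xi]
   still solves [P] (extension_trans). *)
Record extension (J : interp) (xi0 : nat -> idx) (U : list nat)
    (xi : nat -> idx) (U' : list nat) (P : socp) : Prop := {
  extension_sat : Forall (satisfies J xi) P;
  extension_so : so_substitution xi;
  extension_agree : forall al, In al U -> xi al = xi0 al;
  extension_incl : incl U U';
  extension_sov : Forall (fun c => incl (sov_constr c) U') P }.

Lemma extension_trans J xi0 U xi1 U1 P1 xi2 U2 P2 :
  extension J xi0 U xi1 U1 P1 -> extension J xi1 U1 xi2 U2 P2 ->
  extension J xi0 U xi2 U2 (P1 ++ P2).
Proof.
  intros [Hsat1 _ Hag1 Hinc1 Hsov1] [Hsat2 Hso2 Hag2 Hinc2 Hsov2].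
  split.
  - apply Forall_app; split; auto. rewrite Forall_forall in *.
    intros c Hc. apply (satisfies_agree J xi1); auto.
    intros al Hal. symmetry; apply Hag2, (Hsov1 c Hc), Hal.
  - exact Hso2.
  - intros al Hal. rewrite Hag2; auto.
  - eauto using incl_tran.
  - apply Forall_app; split; auto.
    eapply Forall_impl; [|exact Hsov1]. intros c Hc; exact (incl_tran Hc Hinc2).
Qed.

Lemma extension_app J xi0 U xi U' P Q : extension J xi0 U xi U' P ->
  Forall (satisfies J xi) Q -> Forall (fun c => incl (sov_constr c) U') Q ->
  extension J xi0 U xi U' (P ++ Q).
Proof. intros [] HQ HQsov. split; auto; apply Forall_app; auto. Qed.

Lemma so_subst_mono_extension J xi0 U xi U' P r : extension J xi0 U xi U' P ->
  incl (sov_mono r) U -> so_subst_mono xi r = so_subst_mono xi0 r.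
Proof. intros Hext Hr. apply so_subst_mono_agree. intros; apply Hext; auto. Qed.

Lemma so_subst_ctx_extension J xi0 U xi U' P G : extension J xi0 U xi U' P ->
  incl (sov_ctx G) U -> so_subst_ctx xi G = so_subst_ctx xi0 G.
Proof. intros Hext HG. apply so_subst_ctx_agree. intros; apply Hext; auto. Qed.

Lemma extension_instantiate J xi0 U n r rho :
  so_substitution xi0 -> incl (sov_mono r) U -> inst (so_subst_sty xi0 (TAll n r)) rho ->
  exists als xi, fresh_so n als U /\
    so_subst_mono xi (open r (sovars als)) = rho /\
    incl (sov_mono (open r (sovars als))) (als ++ U) /\
    extension J xi0 U xi (als ++ U) [].
Proof.
  intros Hxi0 Hr (as_ & Hlen & Has & ->).
  destruct (fresh_names_exists n U) as (als & Hals & Hnd & Hfr).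
  assert (Hext : extension J xi0 U (so_update xi0 als as_) (als ++ U) []).
  { split; auto using so_update_so_substitution, incl_appr, incl_refl.
    intros al Hal. apply so_update_notin. intros Hin. exact (Hfr al Hin Hal). }
  exists als, (so_update xi0 als as_). split; [split; auto|]. split; [|split; auto].
  - rewrite so_subst_open, map_so_subst_sovars, map_so_update
      by (auto; apply Hext || congruence).
    f_equal. eapply so_subst_mono_extension; eauto.
  - eapply incl_tran; [apply sov_open_sovars | apply incl_app_app; auto using incl_refl].
Qed.

Definition isub_complete_mono (J : interp) (r1 r2 : mono) : Prop :=
  forall t1 t2 xi0 U, so_substitution xi0 ->
  r1 = so_subst_mono xi0 t1 -> r2 = so_subst_mono xi0 t2 ->
  incl (sov_mono t1) U -> incl (sov_mono t2) U ->
  exists P xi U', isub_mono U t1 t2 P U' /\ extension J xi0 U xi U' P.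

Definition isub_complete_sty (J : interp) (s1 s2 : sty) : Prop :=
  forall t1 t2 xi0 U, so_substitution xi0 ->
  s1 = so_subst_sty xi0 t1 -> s2 = so_subst_sty xi0 t2 ->
  incl (sov_sty t1) U -> incl (sov_sty t2) U ->
  exists P xi U', isub_sty U t1 t2 P U' /\ extension J xi0 U xi U' P.

Lemma isub_complete_all J n r1 s2 r2 is :
  fresh_names n is (fv_sty s2 ++ fv_sty (TAll n r1)) -> inst s2 r2 ->
  isub_complete_mono J (open r1 (ivars is)) r2 -> isub_complete_sty J (TAll n r1) s2.
Proof.
  intros Hfresh Hinst IH [n' rt1] [m rt2] xi0 U Hxi0 E1 -> S1 S2.
  injection E1 as -> ->. simpl in S1, S2.
  destruct (extension_instantiate J xi0 U m rt2 r2) as (als & xi1 & Hals & E2 & S2' & Hext1);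
    auto.
  destruct (IH (open rt1 (ivars is)) (open rt2 (sovars als)) xi1 (als ++ U))
    as (P & xi2 & U' & Hisub & Hext2); auto.
  - apply Hext1.
  - rewrite so_subst_open, map_so_subst_ivars by apply Hext1.
    f_equal; symmetry; eapply so_subst_mono_extension; eauto.
  - eapply incl_tran; [apply sov_open_ivars | eauto using incl_appr].
  - pose proof (extension_trans _ _ _ _ _ _ _ _ _ Hext1 Hext2) as Hext.
    simpl in Hfresh.
    rewrite <- !(so_subst_mono_extension _ _ _ _ _ _ _ Hext) in Hfresh by auto.
    destruct Hfresh as (Hlen & Hnd & Hfr).
    exists (P ++ occ is (sov_mono rt1) ++ occ is (sov_mono rt2)), xi2, U'. split.
    + apply ISubAll with (als := als); auto. split; [|split]; auto.
      intros i Hi. specialize (Hfr i Hi). simpl.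
      rewrite !in_app_iff, !(proj1 (in_fv_so_subst_mono_sty xi2 i)) in *. tauto.
    + apply extension_app; auto.
      * rewrite Forall_app, !Forall_satisfies_occ. split; intros i al Hi Hal Hin;
          apply (Hfr i Hi);
          rewrite !in_app_iff, !(proj1 (in_fv_so_subst_mono_sty xi2 i)); eauto.
      * apply Forall_app; split; apply Forall_sov_occ; eapply incl_tran; eauto; apply Hext.
Qed.

Scheme sub_mono_mut := Induction for sub_mono Sort Prop
  with sub_sty_mut := Induction for sub_sty Sort Prop.
Combined Scheme sub_mutind from sub_mono_mut, sub_sty_mut.

Lemma sub_isub_complete J :
  (forall r1 r2, sub_mono J r1 r2 -> isub_complete_mono J r1 r2) /\
  (forall s1 s2, sub_sty J s1 s2 -> isub_complete_sty J s1 s2).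
Proof.
  apply sub_mutind; [| | | intros; eapply isub_complete_all; eauto].
  - intros B a b Hab [] [] xi0 U Hxi0 E1 E2 S1 S2; try discriminate.
    injection E1 as -> ->; injection E2 as <- ->.
    exists [CLe a0 a1], xi0, U. split; [constructor|].
    split; auto using incl_refl. constructor; [apply incl_app|]; auto.
  - intros r1 r2 r1' r2' _ IH1 _ IH2 [|t1 t1'|] [|t2 t2'|] xi0 U Hxi0 E1 E2 S1 S2;
      try discriminate.
    injection E1 as -> ->; injection E2 as -> ->. simpl in S1, S2.
    apply incl_app_inv in S1 as [S1a S1b]; apply incl_app_inv in S2 as [S2a S2b].
    destruct (IH1 _ _ xi0 U Hxi0 eq_refl eq_refl S1a S2a) as (P1 & xi1 & U1 & Hi1 & Hext1).
    destruct (IH2 t1' t2' xi1 U1 (extension_so _ _ _ _ _ _ Hext1))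
      as (P2 & xi2 & U2 & Hi2 & Hext2);
      try (symmetry; eapply so_subst_mono_extension; eauto);
      try (eapply incl_tran; [|apply Hext1]; eauto).
    exists (P1 ++ P2), xi2, U2. split; [econstructor; eauto | eapply extension_trans; eauto].
  - intros s1 r1 s2 r2 _ IH1 _ IH2 [| |st1 rt1] [| |st2 rt2] xi0 U Hxi0 E1 E2 S1 S2;
      try discriminate.
    injection E1 as -> ->; injection E2 as -> ->. simpl in S1, S2.
    apply incl_app_inv in S1 as [S1a S1b]; apply incl_app_inv in S2 as [S2a S2b].
    destruct (IH1 _ _ xi0 U Hxi0 eq_refl eq_refl S2a S1a) as (P1 & xi1 & U1 & Hi1 & Hext1).
    destruct (IH2 rt1 rt2 xi1 U1 (extension_so _ _ _ _ _ _ Hext1))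
      as (P2 & xi2 & U2 & Hi2 & Hext2);
      try (symmetry; eapply so_subst_mono_extension; eauto);
      try (eapply incl_tran; [|apply Hext1]; eauto).
    exists (P1 ++ P2), xi2, U2. split; [econstructor; eauto | eapply extension_trans; eauto].
Qed.

Definition infer_complete_term decl (J : interp) (G' : ctx) (t : term) (rho : mono) : Prop :=
  forall G xi0 U, so_substitution xi0 -> G' = so_subst_ctx xi0 G -> incl (sov_ctx G) U ->
  exists tau xi P U', infer decl U G t P tau U' /\ so_subst_mono xi tau = rho /\
    incl (sov_mono tau) U' /\ extension J xi0 U xi U' P.

Lemma infer_complete_app decl J G' t u n t1 r t2 is :
  infer_complete_term decl J G' t (TArr (TAll n t1) r) ->
  infer_complete_term decl J G' u t2 ->
  fresh_names n is (fv_ctx_on G' (fv_term u) ++ fv_sty (TAll n t1)) ->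
  sub_mono J t2 (open t1 (ivars is)) ->
  infer_complete_term decl J G' (App t u) r.
Proof.
  intros IHt IHu Hfresh Hsub G xi0 U Hxi0 -> HG.
  destruct (IHt G xi0 U Hxi0 eq_refl HG)
    as ([| | [n' t1'] r'] & xi1 & P1 & U1 & Hi1 & E1 & S1 & Hext1); try discriminate.
  injection E1 as -> <- <-. simpl in S1. apply incl_app_inv in S1 as [S1a S1b].
  destruct (IHu G xi1 U1) as (tau2 & xi2 & P2 & U2 & Hi2 & <- & S2 & Hext2).
  { apply Hext1. }
  { symmetry; eapply so_subst_ctx_extension; eauto. }
  { eapply incl_tran; [exact HG | apply Hext1]. }
  destruct (proj1 (sub_isub_complete J) _ _ Hsub tau2 (open t1' (ivars is)) xi2 U2)
    as (P3 & xi3 & U3 & Hi3 & Hext3); auto.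
  { apply Hext2. }
  { rewrite so_subst_open, map_so_subst_ivars by apply Hext2.
    f_equal. symmetry; eapply so_subst_mono_extension; eauto. }
  { eapply incl_tran; [apply sov_open_ivars | eapply incl_tran; [exact S1a | apply Hext2]]. }
  pose proof (extension_trans _ _ _ _ _ _ _ _ _ Hext2 Hext3) as Hext23.
  pose proof (extension_trans _ _ _ _ _ _ _ _ _ Hext1 Hext23) as Hext.
  rewrite <- (so_subst_mono_extension _ _ _ _ _ _ _ Hext23) in Hfresh by auto.
  rewrite <- (so_subst_ctx_extension _ _ _ _ _ _ _ Hext) in Hfresh by auto.
  destruct Hfresh as (Hlen & Hnd & Hfr).
  exists r', xi3,
    (P1 ++ P2 ++ P3 ++ occ is (sov_mono t1') ++ occ is (sov_ctx_on G (fv_term u))), U3.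
  split; [|split; [|split]].
  - eapply IAppI; eauto. split; [|split]; auto.
    intros i Hi. specialize (Hfr i Hi). simpl in *.
    rewrite !in_app_iff, in_fv_so_subst_ctx_on,
      !(proj1 (in_fv_so_subst_mono_sty xi3 i)) in *. tauto.
  - exact (so_subst_mono_extension _ _ _ _ _ _ _ Hext23 S1b).
  - eapply incl_tran; [exact S1b | apply Hext23].
  - rewrite !app_assoc, <- (app_assoc _ _ (occ _ _)). apply extension_app.
    + rewrite <- !app_assoc. exact Hext.
    + rewrite Forall_app, !Forall_satisfies_occ. split; intros i al Hi Hal Hin;
        apply (Hfr i Hi); simpl; rewrite !in_app_iff, in_fv_so_subst_ctx_on,
        !(proj1 (in_fv_so_subst_mono_sty xi3 i)); eauto.
    + apply Forall_app; split; apply Forall_sov_occ.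
      * eapply incl_tran; [exact S1a | apply Hext23].
      * eapply incl_tran; [apply sov_ctx_on_incl|]. eapply incl_tran; [exact HG | apply Hext].
Qed.

Lemma typing_infer_complete decl J : decl_ok decl ->
  forall G' t rho, typing decl J G' t rho -> infer_complete_term decl J G' t rho.
Proof.
  intros Hdecl. induction 1 as [G' x s r Hx Hinst | G' f r Hinst
      | G' x1 x2 t u r1 r2 r Ht IHt Hu IHu | G' t u r1 r2 Ht IHt Hu IHu
      | G' t u n t1 r t2 is Ht IHt Hu IHu Hfresh Hsub];
    [intros G xi0 U Hxi0 -> HG .. | eapply infer_complete_app; eauto].
  - rewrite lookup_so_subst_ctx in Hx.
    destruct (lookup G x) as [[n rt]|] eqn:Hlk; [injection Hx as <- | discriminate].
    destruct (extension_instantiate J xi0 U n rt r) as (als & xi & Hals & E & S & Hext); auto.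
    { exact (incl_tran (lookup_sov_ctx _ _ _ Hlk) HG). }
    exists (open rt (sovars als)), xi, [], (als ++ U). split; [econstructor|]; eauto.
  - destruct (decl f) as [n r0] eqn:Hf. destruct (Hdecl f) as (_ & _ & Hclosed).
    rewrite Hf in Hclosed. rewrite <- (so_subst_sty_closed xi0 _ Hclosed) in Hinst.
    destruct (extension_instantiate J xi0 U n r0 r) as (als & xi & Hals & E & S & Hext); auto.
    { simpl in Hclosed; rewrite Hclosed; intros _ []. }
    exists (open r0 (sovars als)), xi, [], (als ++ U). split; [econstructor|]; eauto.
  - destruct (IHt G xi0 U Hxi0 eq_refl HG)
      as ([| rt1 rt2 |] & xi1 & P1 & U1 & Hi1 & E1 & S1 & Hext1); try discriminate.
    injection E1 as <- <-. simpl in S1. apply incl_app_inv in S1 as [S1a S1b].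
    destruct (IHu ((x2, TAll 0 rt2) :: (x1, TAll 0 rt1) :: G) xi1 U1)
      as (tau & xi2 & P2 & U2 & Hi2 & E2 & S2 & Hext2).
    + apply Hext1.
    + simpl. now rewrite (so_subst_ctx_extension _ _ _ _ _ _ _ Hext1 HG).
    + unfold sov_ctx; simpl. repeat apply incl_app; auto.
      eapply incl_tran; [exact HG | apply Hext1].
    + exists tau, xi2, (P1 ++ P2), U2. split; [econstructor; eauto|].
      split; [|split]; auto. eapply extension_trans; eauto.
  - destruct (IHt G xi0 U Hxi0 eq_refl HG) as (tau1 & xi1 & P1 & U1 & Hi1 & E1 & S1 & Hext1).
    destruct (IHu G xi1 U1) as (tau2 & xi2 & P2 & U2 & Hi2 & E2 & S2 & Hext2).
    + apply Hext1.
    + symmetry; eapply so_subst_ctx_extension; eauto.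
    + eapply incl_tran; [exact HG | apply Hext1].
    + exists (TProd tau1 tau2), xi2, (P1 ++ P2), U2. split; [econstructor; eauto|].
      split; [|split].
      * simpl. rewrite <- E1, E2. f_equal. eapply so_subst_mono_extension; eauto.
      * simpl. apply incl_app; auto. eapply incl_tran; [exact S1 | apply Hext2].
      * eapply extension_trans; eauto.
Qed.

Theorem mainTheorem13 :
  forall decl : nat -> sty, decl_ok decl ->
  (forall (U : list nat) (G : ctx) (t : term) (Phi : socp) (rho : mono) (U' : list nat),
      wf_ctx G ->
      (forall al, In al (sov_ctx G) -> In al U) ->
      infer decl U G t Phi rho U' ->
      forall (J : interp) (xi : nat -> idx),
        model J xi Phi ->
        typing decl J (so_subst_ctx xi G) t (so_subst_mono xi rho))
  /\
  (forall (J : interp) (G : ctx) (t : term) (rho : mono),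
      interpretation J ->
      wf_ctx G -> sov_ctx G = [] ->
      wf_mono [] rho -> sov_mono rho = [] ->
      typing decl J G t rho ->
      exists (tau : mono) (xi : nat -> idx) (Phi : socp) (U' : list nat),
        so_subst_mono xi tau = rho /\
        infer decl [] G t Phi tau U' /\
        model J xi Phi).
Proof.
  (* Neither direction needs the well-formedness hypotheses, nor soundness
     the assumption on U. *)
  intros decl Hdecl. split.
  - intros U G t Phi rho U' _ _ Hinfer J xi (_ & Hxi & Hsat).
    eapply infer_sound; eauto.
  - intros J G t rho HJ _ HG _ _ Hty.
    assert (Hzero : so_substitution (fun _ => IZero)) by (intros al; exact I).
    destruct (typing_infer_complete decl J Hdecl G t rho Hty G (fun _ => IZero) [] Hzero)
      as (tau & xi & Phi & U' & Hinfer & Htau & _ & [Hsat Hxi _ _ _]).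
    + now rewrite so_subst_ctx_closed.
    + rewrite HG; apply incl_refl.
    + exists tau, xi, Phi, U'. repeat split; auto.
Qed.
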